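(* Let $S_{\rm tr}, S_1,\dots,S_m$ be the output of Algorithm 1 (defined in the context) and set $\beta := \sum_{i=1}^m f_i(S_{\rm tr})$. If every $f_i$ is monotone and submodular, then $$\sum_{i=1}^m f_i(S_{\rm tr}\cup S_i)\;\ge\;\max\Bigl\{\beta,\;(1-1/e)(\mathrm{OPT}-2\beta)+\beta\Bigr\}.$$ Consequently $\sum_{i=1}^m f_i(S_{\rm tr}\cup S_i)\ge \tfrac12\,\mathrm{OPT}$ for every value of $\beta$.
   Context: $V$ is a finite ground set with $|V|=n$; $k,l$ are integers with $1\le l<k\le n$. For $i=1,\dots,m$, $f_i:2^V\to\mathbb{R}_{\ge 0}$ is a set function; $f_i$ is monotone if $A\subseteq B\Rightarrow f_i(A)\le f_i(B)$ and submodular if $f_i(A)+f_i(B)\ge f_i(A\cup B)+f_i(A\cap B)$ for all $A,B\subseteq V$. Write $\Delta_i(e\mid S)=f_i(S\cup\{e\})-f_i(S)$. Define $$\mathrm{OPT}=\max_{S_{\rm tr}\subseteq V,\,|S_{\rm tr}|\le l}\;\sum_{i=1}^m\;\max_{S_i\subseteq V,\,|S_i|\le k-l} f_i(S_{\rm tr}\cup S_i).$$ Algorithm 1: start with $S_{\rm tr}=S_1=\dots=S_m=\emptyset$. Phase 1: for $t=1,\dots,l$, choose $e^*\in\arg\max_{e\in V\setminus S_{\rm tr}}\sum_{i=1}^m\Delta_i(e\mid S_{\rm tr})$ and set $S_{\rm tr}\leftarrow S_{\rm tr}\cup\{e^*\}$. Phase 2: for $t=1,\dots,k-l$ and for each $i=1,\dots,m$,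 choose $e_i^*\in\arg\max_{e\in V\setminus(S_{\rm tr}\cup S_i)}\Delta_i(e\mid S_{\rm tr}\cup S_i)$ and set $S_i\leftarrow S_i\cup\{e_i^*\}$. Output $S_{\rm tr},S_1,\dots,S_m$. Ties in all argmax's are broken arbitrarily. *)

From mathcomp Require Import all_boot all_order all_algebra.
From mathcomp Require Import reals sequences exp.
Set Implicit Arguments. Unset Strict Implicit. Unset Printing Implicit Defensive.
Import Order.TTheory GRing.Theory Num.Theory.
Local Open Scope ring_scope.

Section Defs.
Variables (R : realType) (V : finType).

Definition monotone_fn (f : {set V} -> R) : Prop :=
  forall A B : {set V}, A \subset B -> f A <= f B.

Definition submodular_fn (f : {set V} -> R) : Prop :=
  forall A B : {set V}, f A + f B >= f (A :|: B) + f (A :&: B).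

Definition marginal (f : {set V} -> R) (e : V) (S : {set V}) : R :=
  f (e |: S) - f S.

(* [greedy_run g base s]: the sequence s records the successive choices of the
   greedy algorithm that, starting from the set [base], at step t adds an element
   e* of V \ (base u {s_0..s_(t-1)}) maximizing the marginal gain of g, with
   ties broken arbitrarily (any maximizer is allowed). *)
Definition greedy_run (g : {set V} -> R) (base : {set V}) (s : seq V) : Prop :=
  forall (t : nat) (x0 : V), (t < size s)%N ->
    let A := base :|: [set x in take t s] in
    let e := nth x0 s t in
    e \notin A /\ forall e', e' \notin A -> marginal g e' A <= marginal g e A.

(* Maxima are over nonempty finite families (set0 is admissible) of
   nonnegative reals, so folding Num.max with neutral element 0 computes
   exactly the maximum. *)
Definition OPT (m : nat) (f : 'I_m -> {set V} -> R) (k l : nat) : R :=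
  \big[Num.max/0]_(Str : {set V} | (#|Str| <= l)%N)
     \sum_(i < m) \big[Num.max/0]_(Si : {set V} | (#|Si| <= k - l)%N)
                     f i (Str :|: Si).

End Defs.

From mathcomp Require Import all_boot all_order all_algebra.
From mathcomp Require Import reals sequences exp.
From mathcomp Require Import lra.
Import Order.TTheory GRing.Theory Num.Theory.
Local Open Scope ring_scope.
Set Implicit Arguments.
Unset Strict Implicit.

(* Write c = 1 - 1/e, beta = sum_i f_i(S_tr) and val = sum_i f_i(S_tr u S_i).
   The whole proof is the single upper bound
       OPT <= 2 beta + (val - beta) / c,
   from which both claims are elementary arithmetic (using c >= 1/2).
   Fix a shared set Str with |Str| <= l and a personal set Si, |Si| <= k - l:
   - Phase 2 is a greedy run of length k - l from S_tr, so by the classical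
     (1 - 1/e) guarantee f_i(S_tr u Si) - f_i(S_tr) <= (f_i(S_tr u S_i) - f_i(S_tr)) / c,
     and submodularity adds the fresh elements Str \ S_tr at their marginal
     gains over S_tr (lemma greedy_completion_bound);
   - Phase 1 is a greedy run of length l on sum_i f_i from the empty set, so
     every element outside S_tr has total gain at most beta / l, and the at most
     l fresh elements of Str gain at most beta in total (greedy_fresh_gains_le). *)

Section MonotoneSubmodular.
Variables (R : realType) (V : finType) (g : {set V} -> R).
Hypotheses (g_mono : monotone_fn g) (g_subm : submodular_fn g).

Lemma set_nil : [set x in [::]] = set0 :> {set V}.
Proof. by apply/setP => x; rewrite !inE. Qed.

Lemma marginal_ge0 (e : V) (A : {set V}) : 0 <= marginal g e A.
Proof. by rewrite /marginal subr_ge0; apply: g_mono; apply: subsetUr. Qed.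

Lemma marginal_antitone (e : V) (A B : {set V}) :
  A \subset B -> marginal g e B <= marginal g e A.
Proof.
move=> AB; have := g_subm (e |: A) B.
rewrite -setUA (setUidPr AB).
have : g A <= g ((e |: A) :&: B) by apply: g_mono; rewrite subsetI subsetUr AB.
rewrite /marginal; lra.
Qed.

Lemma marginal_mem (e : V) (A : {set V}) : e \in A -> marginal g e A = 0.
Proof. by move=> eA; rewrite /marginal (setUidPr _) ?subrr // sub1set. Qed.

Lemma union_seq_le_marginals (A : {set V}) (s : seq V) :
  g (A :|: [set x in s]) <= g A + \sum_(e <- s) marginal g e A.
Proof.
elim: s => [|a s IH].
  by rewrite big_nil addr0 set_nil setU0.
have -> : [set x in a :: s] = a |: [set x in s] by apply/setP => x; rewrite !inE.
rewrite setUCA big_cons.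
have : marginal g a (A :|: [set x in s]) <= marginal g a A.
  by apply: marginal_antitone; apply: subsetUl.
move: IH; rewrite /marginal; lra.
Qed.

Lemma union_le_marginals (A T : {set V}) :
  g (A :|: T) <= g A + \sum_(e in T) marginal g e A.
Proof.
have := union_seq_le_marginals A (enum T).
by rewrite big_enum (_ : [set x in enum T] = T) //; apply/setP => x; rewrite inE mem_enum.
Qed.

Definition greedy_prefix (base : {set V}) (s : seq V) (t : nat) : {set V} :=
  base :|: [set x in take t s].

Lemma greedy_prefix_step (base : {set V}) (s : seq V) (t : nat) (x0 : V) :
  (t < size s)%N ->
  g (greedy_prefix base s t.+1) - g (greedy_prefix base s t)
  = marginal g (nth x0 s t) (greedy_prefix base s t).
Proof.
move=> ts; rewrite /greedy_prefix (take_nth x0 ts) /marginal setUCA.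
by congr (g (_ :|: _) - _); apply/setP => x; rewrite !inE mem_rcons inE.
Qed.

Lemma greedy_prefix0 (base : {set V}) (s : seq V) : greedy_prefix base s 0 = base.
Proof. by rewrite /greedy_prefix take0 set_nil setU0. Qed.

Lemma greedy_prefix_size (base : {set V}) (s : seq V) :
  greedy_prefix base s (size s) = base :|: [set x in s].
Proof. by rewrite /greedy_prefix take_size. Qed.

Lemma greedy_prefix_sub (base : {set V}) (s : seq V) (t : nat) :
  greedy_prefix base s t \subset base :|: [set x in s].
Proof. by apply: setUS; apply/subsetP => x; rewrite !inE; apply: mem_take. Qed.

(* The gain of an element outside the final greedy set is at most the
   average gain of the run: it was available, and not better, at every step. *)
Lemma greedy_marginal_bound (base : {set V}) (s : seq V) (e : V) :
  greedy_run g base s -> e \notin base :|: [set x in s] ->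
  (size s)%:R * marginal g e (base :|: [set x in s])
    <= g (base :|: [set x in s]) - g base.
Proof.
move=> run e_out; have [-> | s_gt0] := posnP (size s).
  by rewrite mul0r subr_ge0; apply/g_mono/subsetUl.
have x0 : V by case: s s_gt0 {run e_out} => [|x _] //; exact: x.
have -> : g (base :|: [set x in s]) - g base = \sum_(0 <= t < size s)
    (g (greedy_prefix base s t.+1) - g (greedy_prefix base s t)).
  by rewrite telescope_sumr // greedy_prefix_size greedy_prefix0.
rewrite mulr_natl -[X in _ *+ X]subn0 -sumr_const_nat.
apply: ler_sum_nat => t /= ts.
rewrite (greedy_prefix_step _ x0 ts).
have [_ best] := run t x0 ts.
apply: le_trans (best e _); first by apply: marginal_antitone; exact: greedy_prefix_sub.
by apply: contra e_out; apply: (subsetP (greedy_prefix_sub base s t)).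
Qed.

(* Classical greedy contraction: the gap to the value g (base u T) of any
   competitor T with #|T| <= size s shrinks by a factor (1 - 1/size s) per step. *)
Lemma greedy_gap_contracts (base T : {set V}) (s : seq V) (t : nat) :
  greedy_run g base s -> (#|T| <= size s)%N -> (t < size s)%N ->
  g (base :|: T) - g (greedy_prefix base s t)
    <= (size s)%:R * (g (greedy_prefix base s t.+1) - g (greedy_prefix base s t)).
Proof.
move=> run Ts ts.
have x0 : V by move: ts; case: s {run Ts} => [|x _] // _; exact: x.
rewrite (greedy_prefix_step _ x0 ts).
set A := greedy_prefix base s t; set gain := marginal g (nth x0 s t) A.
have grow : g (base :|: T) <= g (A :|: T) by apply/g_mono/setSU/subsetUl.
have gains_T : \sum_(e in T) marginal g e A <= #|T|%:R * gain.
  rewrite mulr_natl -sumr_const; apply: ler_sum => e _.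
  have [eA | e_out] := boolP (e \in A); first by rewrite marginal_mem ?marginal_ge0.
  by have [_ best] := run t x0 ts; exact: best.
have : #|T|%:R * gain <= (size s)%:R * gain.
  by apply: ler_wpM2r; [exact: marginal_ge0 | rewrite ler_nat].
have := union_le_marginals A T; lra.
Qed.

End MonotoneSubmodular.

(* A nonnegative sequence that loses at least a 1/r fraction of itself at each
   of r steps ends below e^-1 times its start, since (1 - 1/r)^r <= e^-1. *)
Lemma geometric_decay (R : realType) (r : nat) (d : nat -> R) :
  (0 < r)%N -> 0 <= d 0%N ->
  (forall t, (t < r)%N -> d t <= r%:R * (d t - d t.+1)) ->
  d r <= expR (-1) * d 0%N.
Proof.
move=> r_gt0 d0_ge0 shrink; have r_pos : (0 : R) < r%:R by rewrite ltr0n.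
pose q : R := 1 - r%:R^-1.
have q_ge0 : 0 <= q by rewrite subr_ge0 invf_le1 // ler1n.
have step t : (t < r)%N -> d t.+1 <= q * d t.
  move=> tr; have : d t / r%:R <= d t - d t.+1 by rewrite ler_pdivrMr // mulrC shrink.
  by rewrite /q mulrBl mul1r mulrC; lra.
have iter t : (t <= r)%N -> d t <= q ^+ t * d 0%N.
  elim: t => [|t IH] tr; first by rewrite expr0 mul1r.
  apply: le_trans (step t tr) _; rewrite exprS -mulrA.
  by apply: ler_wpM2l => //; apply: IH; exact: ltnW.
have q_pow : q ^+ r <= expR (-1).
  have -> : -1 = - r%:R^-1 * r%:R :> R by rewrite mulNr mulVf ?gt_eqF.
  rewrite expRM_natr.
  by apply: lerXn2r; rewrite ?nnegrE ?expR_ge0 //; apply: expR_ge1Dx.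
by apply: le_trans (iter r (leqnn r)) _; apply: ler_wpM2r.
Qed.

(* 1 - 1/e >= 1/2, as e >= 2; in particular the greedy ratio is positive. *)
Lemma half_le_one_sub_expRN1 (R : realType) : 2^-1 <= 1 - expR (-1) :> R.
Proof.
have : expR (-1) <= 2^-1 :> R.
  rewrite expRN lef_pV2 ?posrE ?expR_gt0 //.
  by have := expR_ge1Dx (1 : R); rewrite (_ : 1 + 1 = 2).
lra.
Qed.

Lemma one_sub_expRN1_gt0 (R : realType) : 0 < 1 - expR (-1) :> R.
Proof. by apply: lt_le_trans (half_le_one_sub_expRN1 R); rewrite invr_gt0. Qed.

Section GreedyGuarantees.
Variables (R : realType) (V : finType) (g : {set V} -> R).
Hypotheses (g_mono : monotone_fn g) (g_subm : submodular_fn g).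

Lemma greedy_approximation (base T : {set V}) (s : seq V) :
  greedy_run g base s -> (0 < size s)%N -> (#|T| <= size s)%N ->
  (1 - expR (-1)) * (g (base :|: T) - g base)
    <= g (base :|: [set x in s]) - g base.
Proof.
move=> run s_gt0 Ts.
pose gap j := g (base :|: T) - g (greedy_prefix base s j).
have gap0_ge0 : 0 <= gap 0%N.
  by rewrite /gap greedy_prefix0 subr_ge0; apply/g_mono/subsetUl.
have shrink t : (t < size s)%N -> gap t <= (size s)%:R * (gap t - gap t.+1).
  move=> ts; have -> : gap t - gap t.+1
      = g (greedy_prefix base s t.+1) - g (greedy_prefix base s t) by rewrite /gap; lra.
  exact: greedy_gap_contracts.
have := geometric_decay s_gt0 gap0_ge0 shrink.
rewrite /gap greedy_prefix0 greedy_prefix_size; lra.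
Qed.

(* Phase 1 of the two-phase algorithm: after a greedy run from the empty set,
   any at most size s fresh elements have total marginal gain at most g S,
   each of them gaining at most the average g S / size s. *)
Lemma greedy_fresh_gains_le (s : seq V) (T : {set V}) :
  0 <= g set0 -> greedy_run g set0 s -> (0 < size s)%N -> (#|T| <= size s)%N ->
  \sum_(e in T :\: [set x in s]) marginal g e [set x in s] <= g [set x in s].
Proof.
move=> g0_ge0 run s_gt0 Ts; set S := [set x in s]; set n : R := (size s)%:R.
have n_gt0 : 0 < n by rewrite ltr0n.
have gS_ge0 : 0 <= g S by apply: le_trans g0_ge0 _; apply/g_mono/sub0set.
have avg e : e \in T :\: S -> marginal g e S <= g S / n.
  rewrite inE => /andP [e_out _]; rewrite ler_pdivlMr // mulrC.
  have := greedy_marginal_bound g_mono g_subm run; rewrite set0U => /(_ e e_out).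
  lra.
apply: le_trans (ler_sum _ avg) _; rewrite sumr_const -mulr_natr.
have card_le : #|T :\: S|%:R <= n.
  by rewrite ler_nat (leq_trans _ Ts) // subset_leq_card // subsetDl.
apply: le_trans (ler_wpM2l _ card_le) _; first exact: divr_ge0 (ltW n_gt0).
by rewrite divfK ?gt_eqF.
Qed.

Lemma greedy_completion_bound (base T Si : {set V}) (s : seq V) :
  greedy_run g base s -> (0 < size s)%N -> (#|Si| <= size s)%N ->
  g (T :|: Si) <= g base + (g (base :|: [set x in s]) - g base) / (1 - expR (-1))
                  + \sum_(e in T :\: base) marginal g e base.
Proof.
move=> run s_gt0 Sis.
have Si_gain : g (base :|: Si) - g base
    <= (g (base :|: [set x in s]) - g base) / (1 - expR (-1)).
  rewrite ler_pdivlMr ?one_sub_expRN1_gt0 // mulrC.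
  exact: greedy_approximation.
have cover : g (T :|: Si) <= g ((base :|: Si) :|: (T :\: base)).
  apply: g_mono; apply/subsetP => x; rewrite !inE.
  by case: (x \in base); case: (x \in T); case: (x \in Si).
have fresh : \sum_(e in T :\: base) marginal g e (base :|: Si)
    <= \sum_(e in T :\: base) marginal g e base.
  by apply: ler_sum => e _; apply/marginal_antitone/subsetUl.
have := union_le_marginals g_mono g_subm (base :|: Si) (T :\: base); lra.
Qed.
End GreedyGuarantees.

Section SumOfFunctions.
Variables (R : realType) (V : finType) (m : nat) (f : 'I_m -> {set V} -> R).

Lemma sum_monotone : (forall i, monotone_fn (f i)) ->
  monotone_fn (fun A => \sum_(i < m) f i A).
Proof. by move=> f_mono A B AB; apply: ler_sum => i _; exact: f_mono. Qed.

Lemma sum_submodular : (forall i, submodular_fn (f i)) ->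
  submodular_fn (fun A => \sum_(i < m) f i A).
Proof. by move=> f_subm A B; rewrite -!big_split; apply: ler_sum => i _; exact: f_subm. Qed.

Lemma marginal_sum (e : V) (A : {set V}) :
  marginal (fun B => \sum_(i < m) f i B) e A = \sum_(i < m) marginal (f i) e A.
Proof. by rewrite /marginal sumrB. Qed.

End SumOfFunctions.

Lemma two_phase_bounds (R : realType) (opt beta val : R) :
  0 <= beta -> beta <= val ->
  opt <= 2 * beta + (val - beta) / (1 - expR (-1)) ->
  Num.max beta ((1 - expR (-1)) * (opt - 2 * beta) + beta) <= val
  /\ opt / 2 <= val.
Proof.
move=> beta_ge0 beta_le_val; set c := 1 - expR (-1).
have c_gt0 : 0 < c := one_sub_expRN1_gt0 R.
have c_ge_half : 2^-1 <= c := half_le_one_sub_expRN1 R.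
move=> opt_bound.
have gain_bound : c * (opt - 2 * beta) <= val - beta.
  by rewrite mulrC -ler_pdivlMr //; lra.
have main : c * (opt - 2 * beta) + beta <= val by lra.
split; first by rewrite ge_max beta_le_val main.
have [opt_small | opt_large] := lerP opt (2 * beta); first lra.
have : 2^-1 * (opt - 2 * beta) <= c * (opt - 2 * beta).
  by apply: ler_wpM2r => //; lra.
lra.
Qed.

Section TwoPhase.
Local Unset Implicit Arguments.
Variables (R : realType) (V : finType) (k l m : nat).
Variables (f : 'I_m -> {set V} -> R) (s_tr : seq V) (s : 'I_m -> seq V).
Hypotheses (l_gt0 : (0 < l)%N) (l_lt_k : (l < k)%N).
Hypotheses (f_ge0 : forall i A, 0 <= f i A) (f_mono : forall i, monotone_fn (f i))
  (f_subm : forall i, submodular_fn (f i)).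
Hypotheses (s_tr_size : size s_tr = l)
  (run_tr : greedy_run (fun A => \sum_(i < m) f i A) set0 s_tr).
Hypotheses (s_size : forall i, size (s i) = (k - l)%N)
  (run : forall i, greedy_run (f i) [set x in s_tr] (s i)).

Local Notation S_tr := [set x in s_tr].
Local Notation beta := (\sum_(i < m) f i S_tr).
Local Notation val := (\sum_(i < m) f i (S_tr :|: [set x in s i])).

Let s_gt0 i : (0 < size (s i))%N. Proof. by rewrite s_size subn_gt0. Qed.

Lemma personal_max_le (i : 'I_m) (Str : {set V}) :
  \big[Num.max/0]_(Si : {set V} | (#|Si| <= k - l)%N) f i (Str :|: Si)
  <= f i S_tr + (f i (S_tr :|: [set x in s i]) - f i S_tr) / (1 - expR (-1))
     + \sum_(e in Str :\: S_tr) marginal (f i) e S_tr.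
Proof.
have bound Si := greedy_completion_bound (f_mono i) (f_subm i) Str (Si := Si) (run i) (s_gt0 i).
apply: bigmax_le => [|Si Si_small]; last by apply: bound; rewrite s_size.
by apply: le_trans (f_ge0 i (Str :|: set0)) (bound _ _); rewrite cards0.
Qed.

(* The key estimate: summing over i, the fresh elements of the optimal shared
   set are paid for by phase 1, so OPT <= 2 beta + (val - beta) / (1 - 1/e). *)
Lemma opt_two_phase_bound : OPT f k l <= 2 * beta + (val - beta) / (1 - expR (-1)).
Proof.
apply: bigmax_le => [|Str Str_small].
  apply: addr_ge0; first by apply: mulr_ge0 => //; apply: sumr_ge0.
  apply: divr_ge0; last exact: ltW (one_sub_expRN1_gt0 R).
  by rewrite subr_ge0; apply: ler_sum => i _; apply/f_mono/subsetUl.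
apply: le_trans (ler_sum _ (fun i _ => personal_max_le i Str)) _.
rewrite !big_split /= -mulr_suml sumrB exchange_big /=.
have fresh : \sum_(e in Str :\: S_tr) \sum_(i < m) marginal (f i) e S_tr <= beta.
  under eq_bigr do rewrite -marginal_sum.
  apply: (greedy_fresh_gains_le (sum_monotone f_mono) (sum_submodular f_subm)) => //.
  - by apply: sumr_ge0 => i _.
  - by rewrite s_tr_size.
  - by rewrite s_tr_size.
lra.
Qed.

End TwoPhase.

Theorem proposition1 (R : realType) (V : finType) (k l m : nat)
  (f : 'I_m -> {set V} -> R)
  (s_tr : seq V) (s : 'I_m -> seq V) :
  (1 <= l)%N -> (l < k)%N -> (k <= #|V|)%N ->
  (forall i A, 0 <= f i A) ->
  (forall i, monotone_fn (f i)) ->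
  (forall i, submodular_fn (f i)) ->
  (* Phase 1: l greedy steps on sum_i f_i starting from the empty set *)
  size s_tr = l ->
  greedy_run (fun A => \sum_(i < m) f i A) set0 s_tr ->
  (* Phase 2: for each i, k - l greedy steps on f_i starting from S_tr *)
  (forall i, size (s i) = (k - l)%N) ->
  (forall i, greedy_run (f i) [set x in s_tr] (s i)) ->
  let S_tr := [set x in s_tr] in
  let S := fun i => [set x in s i] in
  let beta := \sum_(i < m) f i S_tr in
  let val := \sum_(i < m) f i (S_tr :|: S i) in
  Num.max beta ((1 - expR (- 1)) * (OPT f k l - 2 * beta) + beta) <= val
  /\ OPT f k l / 2 <= val.
Proof.
move=> l_gt0 l_lt_k _ f_ge0 f_mono f_subm s_tr_size run_tr s_size run S_tr S beta val.
apply: two_phase_bounds.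
- by apply: sumr_ge0.
- by apply: ler_sum => i _; apply/f_mono/subsetUl.
- exact: opt_two_phase_bound.
Qed.
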